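(* Let $(X_n,\eta_n)$ be a time-homogeneous Markov chain on a locally finite set $\Sigma\subseteq\mathbb{R}_+\times S$ ($S$ finite), and suppose that for some $p>2$ there is $C_p<\infty$ with $\mathbb{E}_{x,i}[|X_{n+1}-X_n|^p]\le C_p$ for all $(x,i)\in\Sigma$. Let $b_i\in\mathbb{R}$, $i\in S$, and let $f_r$ be as in the context. Then for any $r\in(2-p,p]$ one can choose $\zeta\in(0,1)$ such that, with $E_n=\{|X_{n+1}-X_n|\le X_n^\zeta\}$, as $x\to\infty$, \[\mathbb{E}_{x,i}\big[|f_r(X_{n+1},\eta_{n+1})-f_r(X_n,\eta_n)|\mathbf 1(E_n^c)\big]=o(x^{r-2}).\]
   Context: $\mathbb{E}_{x,i}[\cdot]=\mathbb{E}[\cdot\mid X_n=x,\eta_n=i]$; $E_n^c$ is the complement of $E_n$. For $r\in\mathbb{R}$, $x_0:=1+\sqrt{|r|\max_i|b_i|}$ and $f_r(x,i)=x^r+\frac r2b_ix^{r-2}$ for $x\ge x_0$, $f_r(x,i)=x_0^r+\frac r2b_ix_0^{r-2}$ for $x<x_0$. *)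

From HB Require Import structures.
From mathcomp Require Import all_boot all_order all_algebra.
From mathcomp Require Import all_classical all_reals all_analysis.
Set Implicit Arguments. Unset Strict Implicit. Unset Printing Implicit Defensive.
Import Order.TTheory GRing.Theory Num.Theory.
Local Open Scope ring_scope.

Definition xzero (R : realType) (S : finType) (b : S -> R) (r : R) : R :=
  1 + Num.sqrt (`|r| * \big[Num.max/0]_(i : S) `|b i|).

Definition f_r (R : realType) (S : finType) (b : S -> R) (r : R) (z : R * S) : R :=
  let x := if xzero b r <= z.1 then z.1 else xzero b r in
  powR x r + r / 2 * b z.2 * powR x (r - 2).

(* A jump with |X_{n+1} - X_n| > x^zeta is so large that max(x, jump) <= jump^(1/zeta).
   Since |f_r| grows like x^s with s = max(r, 0) <= p, on such a jump the increment of f_r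
   is at most a constant times jump^p x^(s - zeta p); the p-th moment bound then makes the
   whole expectation O(x^(s - zeta p)), and zeta close enough to 1 makes s - zeta p < r - 2
   exactly when r > 2 - p. *)
From HB Require Import structures.
From mathcomp Require Import all_boot all_order all_algebra.
From mathcomp Require Import all_classical all_reals all_analysis.
From mathcomp Require Import lra ring.
Import Order.TTheory GRing.Theory Num.Theory.
Local Open Scope classical_set_scope.
Local Open Scope ring_scope.
Set Implicit Arguments. Unset Strict Implicit.

Lemma le_esumZl (R : realType) (T : choiceType) (I : set T) (a : T -> \bar R) (c : R) :
  0 <= c -> (forall i, (0 <= a i)%E) ->
  (\esum_(i in I) (c%:E * a i) <= c%:E * \esum_(i in I) a i)%E.
Proof.
move=> c0 a0; apply: ge_ereal_sup => _ [X [finX XI] <-].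
rewrite fsbig_finite// -ge0_sume_distrr; last by move=> i _; exact: a0.
apply: lee_wpmul2l; first by rewrite lee_fin.
rewrite -fsbig_finite//; apply: ereal_sup_ubound; exists X => //.
Qed.

Section PowRBounds.
Variable R : realType.

(* Case [D <= x] uses [x^(zeta p) < D^p]; case [x < D] uses [D^(s - p) <= x^(zeta (s - p))]
   and [zeta s <= s]. *)
Lemma powR_max_le (x D zeta s p : R) :
  1 <= x -> 0 < zeta <= 1 -> 0 <= s <= p -> powR x zeta < D ->
  powR (Num.max x D) s <= powR D p * powR x (s - zeta * p).
Proof.
move=> x1 /andP[z0 z1] /andP[s0 sp] hD.
have x0 : 0 < x by lra.
have xz0 : 0 < powR x zeta by exact: powR_gt0.
have D0 : 0 < D by lra.
have [xD|Dx] := lerP x D.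
- rewrite -{1}(subrK p s) [X in X <= _]powRD; last by apply/implyP => _; rewrite gt_eqF.
  rewrite mulrC ler_pM2l; last exact: powR_gt0.
  have le_pow : powR (powR x zeta) (p - s) <= powR D (p - s).
    by apply: ge0_ler_powR; rewrite ?nnegrE; lra.
  rewrite -opprB powRN (@le_trans _ _ (powR (powR x zeta) (p - s))^-1) //.
    by rewrite lef_pV2 ?posrE ?powR_gt0.
  by rewrite -powRrM -powRN; apply: ler_powR => //; nra.
- rewrite -{1}(subrK (zeta * p) s) [X in X <= _]powRD; last by apply/implyP => _; rewrite gt_eqF.
  rewrite mulrC ler_pM2r; last exact: powR_gt0.
  by rewrite powRrM; apply: ge0_ler_powR; rewrite ?nnegrE; lra.
Qed.

Lemma powRN_le (x a q : R) :
  0 < a -> 0 < q -> powR (q^-1) a^-1 <= x -> powR x (- a) <= q.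
Proof.
move=> a0 q0 hx.
have qi0 : 0 < q^-1 by rewrite invr_gt0.
have x0 : 0 < x by exact: lt_le_trans (powR_gt0 _ _) hx.
have le_qx : q^-1 <= powR x a.
  have -> : q^-1 = powR (powR (q^-1) a^-1) a.
    by rewrite -powRrM mulVf ?gt_eqF // powRr1 // ltW.
  by apply: ge0_ler_powR; rewrite ?nnegrE ?powR_ge0 // ltW.
by rewrite powRN -[q]invrK lef_pV2 ?posrE // powR_gt0.
Qed.

(* [eps / (|c| + 1)] absorbs the sign of [c]. *)
Lemma mulr_powRN_eventually_le (c a eps : R) : 0 < a -> 0 < eps ->
  exists M, forall x, M <= x -> c * powR x (- a) <= eps.
Proof.
move=> a0 eps0.
have c1 : 0 < `|c| + 1 by have := normr_ge0 c; lra.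
set q := eps / (`|c| + 1).
have q0 : 0 < q by rewrite divr_gt0.
exists (powR q^-1 a^-1) => x hx.
apply: (@le_trans _ _ (`|c| * q)); last by rewrite /q mulrA ler_pdivrMr //; nra.
apply: (@le_trans _ _ (`|c| * powR x (- a))); first by rewrite ler_wpM2r ?powR_ge0 ?ler_norm.
by rewrite ler_wpM2l //; exact: powRN_le.
Qed.

End PowRBounds.

Section JumpOfFr.
Variables (R : realType) (S : finType) (b : S -> R) (r : R).

Definition fr_clamp (z : R * S) : R := if xzero b r <= z.1 then z.1 else xzero b r.

Definition fr_const : R := 1 + `|r / 2| * \big[Num.max/0]_(i : S) `|b i|.

Lemma xzero_ge1 : 1 <= xzero b r.
Proof. by rewrite /xzero lerDl sqrtr_ge0. Qed.

Lemma fr_clamp_ge1 z : 1 <= fr_clamp z.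
Proof.
rewrite /fr_clamp; case: ifP => h; last exact: xzero_ge1.
exact: le_trans xzero_ge1 h.
Qed.

Lemma fr_const_ge0 : 0 <= fr_const.
Proof. by rewrite addr_ge0 // mulr_ge0 // bigmax_ge_id. Qed.

Lemma norm_f_r_le z :
  `|f_r b r z| <= fr_const * powR (fr_clamp z) (Num.max r 0).
Proof.
have y1 := fr_clamp_ge1 z.
rewrite /f_r -/(fr_clamp z) /fr_const.
set y := fr_clamp z; set s := Num.max r 0; set B := \big[Num.max/0]_(i : S) `|b i|.
have yr : powR y r <= powR y s by apply: ler_powR => //; rewrite le_max lexx.
have yr2 : powR y (r - 2) <= powR y s by apply: ler_powR; rewrite // le_max; lra.
have bB : `|b z.2| <= B by apply: le_bigmax.
have y0 := powR_ge0 y (r - 2).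
rewrite (le_trans (ler_normD _ _)) //.
rewrite (normrM (r / 2 * b z.2)) (normrM (r / 2)) (ger0_norm (powR_ge0 y r)) (ger0_norm y0).
have : `|r / 2| * `|b z.2| * powR y (r - 2) <= `|r / 2| * B * powR y s.
  by apply: ler_pM; rewrite ?mulr_ge0 // ler_pM.
nra.
Qed.

(* Above [x_0], [f_r] is unclamped at [z], and at [w] the clamp is at most [x + D <= 2 max(x, D)]. *)
Lemma f_r_jump_le z w : xzero b r <= z.1 ->
  `|f_r b r w - f_r b r z| <=
    fr_const * (powR 2 (Num.max r 0) + 1) * powR (Num.max z.1 `|w.1 - z.1|) (Num.max r 0).
Proof.
set s := Num.max r 0; set x := z.1; set D := `|w.1 - z.1|; set m := Num.max x D.
move=> hx.
have K0 := fr_const_ge0.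
have z_base : fr_clamp z = x by rewrite /fr_clamp -/x hx.
have hwD : w.1 <= x + D by have := ler_norm (w.1 - z.1); rewrite -/D -/x; lra.
have xm : x <= m by rewrite le_max lexx.
have Dm : D <= m by rewrite le_max lexx orbT.
have x1 : 1 <= x by exact: le_trans (xzero_ge1) hx.
have w_base : fr_clamp w <= 2 * m by rewrite /fr_clamp; case: ifP => _; lra.
have s0 : 0 <= s by rewrite le_max lexx orbT.
have m0 : 0 <= m by lra.
have le_w : powR (fr_clamp w) s <= powR 2 s * powR m s.
  rewrite -powRM //; apply: ge0_ler_powR; rewrite ?nnegrE //; last lra.
  by have := fr_clamp_ge1 w; lra.
have le_z : powR x s <= powR m s.
  by apply: ge0_ler_powR; rewrite ?nnegrE //; lra.
have fw := norm_f_r_le w; have fz := norm_f_r_le z; rewrite z_base in fz.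
apply: le_trans (ler_normB _ _) _.
have := ler_wpM2l K0 le_w; have := ler_wpM2l K0 le_z; have := powR_ge0 m s.
rewrite -/s in fw fz *; nra.
Qed.

End JumpOfFr.

Lemma esum_large_jumps_le (R : realType) (S : finType) (Sigma : set (R * S))
    (P : R * S -> R * S -> R) (b : S -> R) (r p Cp zeta : R) (z : R * S) :
  (forall w, 0 <= P z w) -> 0 < zeta <= 1 -> Num.max r 0 <= p -> xzero b r <= z.1 ->
  (\esum_(w in Sigma) (P z w * powR `|w.1 - z.1| p)%:E <= Cp%:E)%E ->
  (\esum_(w in Sigma)
     (P z w * `|f_r b r w - f_r b r z|
        * (if powR z.1 zeta < `|w.1 - z.1| then 1 else 0))%:E
   <= (fr_const b r * (powR 2 (Num.max r 0) + 1) * Cp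
        * powR z.1 (Num.max r 0 - zeta * p))%:E)%E.
Proof.
set s := Num.max r 0; set K := fr_const b r * (powR 2 s + 1).
move=> P0 hzeta sp hx hmom.
have s0 : 0 <= s by rewrite le_max lexx orbT.
have x1 : 1 <= z.1 := le_trans (xzero_ge1 b r) hx.
have K0 : 0 <= K by rewrite mulr_ge0 ?fr_const_ge0 // addr_ge0 ?powR_ge0.
set c := K * powR z.1 (s - zeta * p).
have c0 : 0 <= c by rewrite mulr_ge0 ?powR_ge0.
have jump_le w : P z w * `|f_r b r w - f_r b r z|
                   * (if powR z.1 zeta < `|w.1 - z.1| then 1 else 0)
                 <= c * (P z w * powR `|w.1 - z.1| p).
  case: ifP => [large|_]; last by rewrite mulr0 mulr_ge0 // mulr_ge0 ?powR_ge0.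
  rewrite mulr1 mulrCA ler_wpM2l //.
  apply: le_trans (f_r_jump_le w hx) _.
  rewrite -/s -/K /c -[leRHS]mulrA ler_wpM2l // mulrC.
  by apply: powR_max_le; rewrite ?s0.
apply: (@le_trans _ _ (\esum_(w in Sigma) (c%:E * (P z w * powR `|w.1 - z.1| p)%:E))%E).
  by apply: le_esum => w _; rewrite -EFinM lee_fin jump_le.
apply: le_trans (le_esumZl _ c0 _) _.
  by move=> w; rewrite lee_fin mulr_ge0 ?powR_ge0.
apply: le_trans (lee_wpmul2l _ hmom) _; first by rewrite lee_fin.
by rewrite -EFinM lee_fin /c mulrAC.
Qed.

Lemma exists_exponent_gap (R : realType) (p r : R) : 2 < p -> 2 - p < r <= p ->
  exists2 zeta : R, 0 < zeta < 1 & exists2 a : R, 0 < a & Num.max r 0 - zeta * p = r - 2 - a.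
Proof.
move=> hp /andP[r_gt r_le].
set s := Num.max r 0.
have rs : r <= s by rewrite le_max lexx.
have s_lt : s < r + p - 2 by rewrite gt_max; apply/andP; split; lra.
set a := (r + p - 2 - s) / 2.
have a0 : 0 < a by rewrite divr_gt0 //; lra.
have ap : a < p by rewrite /a ltr_pdivrMr; lra.
have p0 : 0 < p by lra.
exists (1 - a / p).
  have /andP[ap0 ap1] : 0 < a / p < 1 by rewrite divr_gt0 //= ltr_pdivrMr //; lra.
  by apply/andP; split; lra.
by exists a => //; rewrite /a; field; lra.
Qed.

Theorem lemma3p7 (R : realType) (S : finType) (Sigma : set (R * S))
  (P : R * S -> R * S -> R) (p Cp : R) (b : S -> R)
  (hSig_pos : forall z, Sigma z -> 0 <= z.1)
  (hSig_lf : forall M : R, finite_set [set z | Sigma z /\ z.1 <= M])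
  (hP0 : forall z w, 0 <= P z w)
  (hP1 : forall z, Sigma z -> (\esum_(w in Sigma) (P z w)%:E = 1)%E)
  (hp : 2 < p)
  (hmom : forall z, Sigma z ->
     (\esum_(w in Sigma) (P z w * powR `|w.1 - z.1| p)%:E <= Cp%:E)%E) :
  forall r : R, 2 - p < r <= p ->
  exists zeta : R, 0 < zeta < 1 /\
    forall eps : R, 0 < eps -> exists M : R, forall z, Sigma z -> M <= z.1 ->
      (\esum_(w in Sigma)
         (P z w * `|f_r b r w - f_r b r z|
            * (if powR z.1 zeta < `|w.1 - z.1| then 1 else 0))%:E
       <= (eps * powR z.1 (r - 2))%:E)%E.
Proof.
move=> r hr; have /andP[_ r_le] := hr.
have [zeta /andP[zeta_gt0 zeta_lt1] [a a0 exponent]] := exists_exponent_gap hp hr.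
exists zeta; split; first by rewrite zeta_gt0.
move=> eps eps0.
set K := fr_const b r * (powR 2 (Num.max r 0) + 1).
have [M large] := mulr_powRN_eventually_le (K * Cp) a0 eps0.
exists (Num.max (xzero b r) M) => z Sz; rewrite ge_max => /andP[hx hM].
have sp : Num.max r 0 <= p by rewrite ge_max r_le; lra.
have zeta_le1 : 0 < zeta <= 1 by rewrite zeta_gt0 ltW.
apply: le_trans (esum_large_jumps_le (hP0 z) zeta_le1 sp hx (hmom z Sz)) _.
have x0 : 0 < z.1 by have := xzero_ge1 b r; lra.
rewrite lee_fin -/K exponent powRD; last by apply/implyP => _; rewrite gt_eqF.
by rewrite mulrCA [eps * _]mulrC ler_wpM2l ?powR_ge0 ?large.
Qed.
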